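(* Let $N\ge4$, $n=N-1$, $\epsilon>0$, let $\pi=(\pi_{ij})$ be a trace-free symmetric real $n\times n$ matrix, and let $a_1,a_2\in\mathbb{R}$. Define on $\mathbb{R}^N_+$ \[\Phi(x)=\frac{\epsilon\,\pi_{ij}x_ix_j}{(|\bar x|^2+(x_N+1)^2)^{\frac N2}}\Big[\Big(\frac{N-2}{2}\Big)(x_N-1)+\frac{a_1(x_N+1)}{(|\bar x|^2+(x_N+1)^2)^2}+\frac{a_2}{|\bar x|^2+(x_N+1)^2}\Big].\] Then $-\Delta\Phi=2\epsilon\,\pi_{ij}\,x_N\,\partial_{ij}W_{1,0}$ in $\mathbb{R}^N_+$.
   Context: $\mathbb{R}^N_+=\{x=(\bar x,x_N):\bar x\in\mathbb{R}^n,\ x_N>0\}$. $W_{1,0}(x)=(|\bar x|^2+(x_N+1)^2)^{-\frac{N-2}{2}}$. Repeated indices $i,j$ are summed from $1$ to $n$. *)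

From HB Require Import structures.
From mathcomp Require Import all_boot all_order all_algebra.
From mathcomp Require Import all_classical all_reals all_analysis.
Set Implicit Arguments. Unset Strict Implicit. Unset Printing Implicit Defensive.
Import Order.TTheory GRing.Theory Num.Theory.
Import numFieldNormedType.Exports.
Local Open Scope ring_scope.

(* Points of R^N with N = n.+1 are row vectors 'rV[R]_(n.+1);
   the last coordinate (index ord_max, value n) is x_N,
   the first n coordinates form \bar x. *)

Definition xN {R : realType} {n : nat} (x : 'rV[R]_n.+1) : R := x ord0 ord_max.
Definition xb {R : realType} {n : nat} (x : 'rV[R]_n.+1) (i : 'I_n) : R :=
  x ord0 (widen_ord (leqnSn n) i).

Definition rho {R : realType} {n : nat} (x : 'rV[R]_n.+1) : R :=
  \sum_(i < n) xb x i ^+ 2 + (xN x + 1) ^+ 2.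

Definition ecoord {R : realType} {n : nat} (k : 'I_n.+1) : 'rV[R]_n.+1 :=
  delta_mx ord0 k.

Definition partial {R : realType} {n : nat} (k : 'I_n.+1)
  (f : 'rV[R]_n.+1 -> R) : 'rV[R]_n.+1 -> R :=
  fun x => 'D_(ecoord k) f x.

Definition laplacian {R : realType} {n : nat} (f : 'rV[R]_n.+1 -> R)
  (x : 'rV[R]_n.+1) : R :=
  \sum_(k < n.+1) partial k (partial k f) x.

Definition W10 {R : realType} {n : nat} (x : 'rV[R]_n.+1) : R :=
  rho x `^ (- ((n.+1)%:R - 2) / 2).

Definition Phi {R : realType} {n : nat} (eps : R) (pi : 'M[R]_n) (a1 a2 : R)
  (x : 'rV[R]_n.+1) : R :=
  eps * (\sum_(i < n) \sum_(j < n) pi i j * xb x i * xb x j)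
    / rho x `^ ((n.+1)%:R / 2)
  * ((((n.+1)%:R - 2) / 2) * (xN x - 1)
     + a1 * (xN x + 1) / rho x ^+ 2
     + a2 / rho x).

From HB Require Import structures.
From mathcomp Require Import all_boot all_order all_algebra.
From mathcomp Require Import all_classical all_reals all_analysis.
From mathcomp Require Import ring lra.
Import Order.TTheory GRing.Theory Num.Theory.
Import numFieldNormedType.Exports.
Set Implicit Arguments. Unset Strict Implicit. Unset Printing Implicit Defensive.
Local Open Scope classical_set_scope.
Local Open Scope ring_scope.

(** With Q = pi_ij x_i x_j and rho = |\bar x|^2 + (x_N + 1)^2 we have
   W_{1,0} = rho^q, q = -(N-2)/2, and Phi = eps (T_1 + T_2 + T_3) with terms
   of the form T = Q (a x_N + b) rho^p.  As Q is homogeneous of degree 2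
   (x.grad Q = 2 Q) and harmonic (Delta Q = 2 tr pi = 0),
     Delta T = p Q rho^(p-1) ((2N + 4 + 4p) (a x_N + b) + 4 a (x_N + 1)),
   which vanishes for the a_1-term (p = -N/2 - 2) and the a_2-term
   (a = 0, p = -N/2 - 1), while the first term gives
   Delta Phi = -2 eps N (N-2) x_N Q rho^(-N/2-1).  On the other side
     d_i d_j rho^q = 4 q (q-1) rho^(q-2) x_i x_j + 2 q rho^(q-1) delta_ij,
   whose contraction with the trace-free pi is N (N-2) Q rho^(-N/2-1). *)

Section DirectionalDerivative.
Variables (R : realType) (V : normedModType R).
Implicit Types (f g : V -> R) (x v : V).

Lemma derive_line f x v : 'D_v f x = 'D_1 (fun h : R => f (h *: v + x)) 0.
Proof.
rewrite /derive /=.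
have -> : (fun h : R => h^-1 *: (f (((h%:A : R) + 0) *: v + x) - f (0 *: v + x))) =
  (fun h : R => h^-1 *: (f (h *: v + x) - f x)).
  by apply/funext => h; rewrite scale0r add0r addr0 [h%:A]mulr1.
by [].
Qed.

Lemma is_derive_line f x v df :
  is_derive (0 : R) 1 (fun h : R => f (h *: v + x)) df -> is_derive x v f df.
Proof.
move=> [d1 v1]; apply: DeriveDef; first exact: (derivable1P f x v).2 d1.
by rewrite derive_line.
Qed.

Lemma is_derive_add f g x v df dg : is_derive x v f df -> is_derive x v g dg ->
  is_derive x v (fun y => f y + g y) (df + dg).
Proof. exact: is_deriveD. Qed.

Lemma is_derive_sub f g x v df dg : is_derive x v f df -> is_derive x v g dg ->
  is_derive x v (fun y => f y - g y) (df - dg).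
Proof. exact: is_deriveB. Qed.

Lemma is_derive_mul f g x v df dg : is_derive x v f df -> is_derive x v g dg ->
  is_derive x v (fun y => f y * g y) (f x * dg + g x * df).
Proof. exact: is_deriveM. Qed.

Lemma is_derive_sqr f x v df : is_derive x v f df ->
  is_derive x v (fun y => f y ^+ 2) (2 * f x * df).
Proof.
move=> fdf; have -> : (fun y => f y ^+ 2) = (fun y => f y * f y).
  by apply/funext => y; rewrite expr2.
by apply: is_derive_eq (is_derive_mul fdf fdf) _; ring.
Qed.

Lemma is_derive_sumr (m : nat) (F : 'I_m -> V -> R) x v (dF : 'I_m -> R) :
  (forall i, is_derive x v (F i) (dF i)) ->
  is_derive x v (fun y => \sum_(i < m) F i y) (\sum_(i < m) dF i).
Proof.
move=> FdF; apply: near_eq_is_derive (is_derive_sum FdF).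
by near=> y; rewrite fct_sumE.
Unshelve. all: by end_near. Qed.

Lemma is_derive_powR f x v df (p : R) : 0 < f x -> is_derive x v f df ->
  is_derive x v (fun y => f y `^ p) (p * f x `^ (p - 1) * df).
Proof.
move=> fx_gt0 [fd fdv]; apply: is_derive_line.
have dl : derivable (fun h : R => f (h *: v + x)) 0 1 := (derivable1P f x v).1 fd.
have dp : derivable (fun r : R => r `^ p) (f (0 *: v + x)) 1.
  by rewrite scale0r add0r; case: (is_derive1_powR p fx_gt0).
have -> : (fun h : R => f (h *: v + x) `^ p) =
  (fun r : R => r `^ p) \o (fun h : R => f (h *: v + x)) by [].
apply: DeriveDef.
  by apply/derivable1_diffP; apply: differentiable_comp; apply/derivable1_diffP.
rewrite -derive1E (derive1_comp dl dp) !derive1E -derive_line fdv scale0r add0r.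
by rewrite (@derive_val _ _ _ _ _ _ _ (is_derive1_powR p fx_gt0)) mulrC mulrA.
Qed.

Lemma derive2_near (F DF : V -> R) d2 x u w :
  (\forall y \near x, is_derive y w F (DF y)) -> is_derive x u DF d2 ->
  'D_u (fun y => 'D_w F y) x = d2.
Proof.
move=> FDF DFd2; apply: derive_val; apply: near_eq_is_derive DFd2.
by apply: filterS FDF => y yFDF; rewrite derive_val.
Qed.

End DirectionalDerivative.

Section HalfSpace.
Variables (R : realType) (n : nat) (pi : 'M[R]_n).
Local Notation V := 'rV[R]_n.+1.
Local Notation wi := (widen_ord (leqnSn n)).
Local Notation e := (@ecoord R n).
Local Notation NN := ((n.+1)%:R : R).
Local Notation qW := (- (NN - 2) / 2).
Implicit Types (x y v w u : V).

Lemma is_derive_coord x v j : is_derive x v (fun y : V => y ord0 j) (v ord0 j).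
Proof.
have quotient_cst : {near (0 : R)^', cst (v ord0 j) =1
    (fun h : R => h^-1 *: (((fun y : V => y ord0 j) \o shift x) (h *: v) - x ord0 j))}.
  near=> h; rewrite /= !mxE addrK /cst.
  rewrite (_ : h^-1 *: (h * v ord0 j) = h^-1 * (h * v ord0 j)) // mulKf //.
  by near: h; exact: nbhs_dnbhs_neq.
have quotient_cvg : (fun h : R => h^-1 *: (((fun y : V => y ord0 j) \o shift x) (h *: v)
    - x ord0 j)) @ (0 : R)^' --> v ord0 j.
  exact: cvg_trans (near_eq_cvg quotient_cst) (cvg_cst _).
by apply: DeriveDef; [apply/cvg_ex; exists (v ord0 j) | exact: cvg_lim quotient_cvg].
Unshelve. all: by end_near. Qed.

Lemma is_derive_xb x v i : is_derive x v (fun y : V => xb y i) (xb v i).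
Proof. exact: is_derive_coord. Qed.

Lemma is_derive_xN x v : is_derive x v (fun y : V => xN y) (xN v).
Proof. exact: is_derive_coord. Qed.

Ltac is_derive_step := first [ exact: is_derive_xb | exact: is_derive_xN
  | exact: is_derive_cst | apply: is_derive_add | apply: is_derive_sub
  | apply: is_derive_mul | apply: is_derive_powR; first assumption ].

Definition qform y := \sum_(i < n) \sum_(j < n) pi i j * xb y i * xb y j.
Definition dqform v y :=
  \sum_(i < n) \sum_(j < n) pi i j * (xb v i * xb y j + xb y i * xb v j).
Definition d2qform v :=
  \sum_(i < n) \sum_(j < n) pi i j * (xb v i * xb v j + xb v i * xb v j).
Definition drho v y := \sum_(i < n) 2 * xb y i * xb v i + 2 * (xN y + 1) * xN v.
Definition d2rho u w := \sum_(i < n) 2 * xb u i * xb w i + 2 * xN u * xN w.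

Lemma is_derive_qform x v : is_derive x v qform (dqform v x).
Proof.
apply: is_derive_eq.
  by apply: is_derive_sumr => i; apply: is_derive_sumr => j; repeat is_derive_step.
by apply: eq_bigr => i _; apply: eq_bigr => j _; ring.
Qed.

Lemma is_derive_dqform x v : is_derive x v (dqform v) (d2qform v).
Proof.
apply: is_derive_eq.
  by apply: is_derive_sumr => i; apply: is_derive_sumr => j; repeat is_derive_step.
by apply: eq_bigr => i _; apply: eq_bigr => j _; ring.
Qed.

Lemma is_derive_rho x v : is_derive x v rho (drho v x).
Proof.
apply: is_derive_eq.
  apply: is_derive_add.
    by apply: is_derive_sumr => i; apply: is_derive_sqr; exact: is_derive_xb.
  by apply: is_derive_sqr; repeat is_derive_step.
by rewrite /drho addr0.
Qed.

Lemma is_derive_drho x u w : is_derive x u (drho w) (d2rho u w).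
Proof.
apply: is_derive_eq.
  by apply: is_derive_add; [apply: is_derive_sumr => i |]; repeat is_derive_step.
by rewrite /d2rho; congr (_ + _); [apply: eq_bigr => i _ |]; ring.
Qed.

Ltac is_derive_rules := repeat first [ exact: is_derive_qform
  | exact: is_derive_dqform | exact: is_derive_rho | exact: is_derive_drho
  | is_derive_step ].

Definition phi_term (a b p : R) y := qform y * (a * xN y + b) * rho y `^ p.
Definition dphi_term (a b p : R) v y :=
  (dqform v y * (a * xN y + b) + qform y * (a * xN v)) * rho y `^ p
  + qform y * (a * xN y + b) * (p * rho y `^ (p - 1) * drho v y).
Definition d2phi_term (a b p : R) v y :=
  (d2qform v * (a * xN y + b) + 2 * dqform v y * (a * xN v)) * rho y `^ p
  + 2 * (dqform v y * (a * xN y + b) + qform y * (a * xN v))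
      * (p * rho y `^ (p - 1) * drho v y)
  + qform y * (a * xN y + b)
      * (p * ((p - 1) * rho y `^ (p - 1 - 1) * drho v y ^+ 2
              + rho y `^ (p - 1) * d2rho v v)).

Lemma is_derive_phi_term a b p y v :
  0 < rho y -> is_derive y v (phi_term a b p) (dphi_term a b p v y).
Proof.
by move=> rhoy_gt0; apply: is_derive_eq; [is_derive_rules | rewrite /dphi_term; ring].
Qed.

Lemma is_derive_dphi_term a b p y v :
  0 < rho y -> is_derive y v (dphi_term a b p v) (d2phi_term a b p v y).
Proof.
move=> rhoy_gt0; apply: is_derive_eq; first is_derive_rules.
by rewrite /d2phi_term expr2; ring.
Qed.

Definition dW10 w y := qW * rho y `^ (qW - 1) * drho w y.
Definition d2W10 u w y :=
  qW * ((qW - 1) * rho y `^ (qW - 1 - 1) * drho u y) * drho w y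
  + qW * rho y `^ (qW - 1) * d2rho u w.

Lemma is_derive_W10 y w : 0 < rho y -> is_derive y w (@W10 R n) (dW10 w y).
Proof. by move=> rhoy_gt0; apply: is_derive_eq; [is_derive_rules | rewrite /dW10]. Qed.

Lemma is_derive_dW10 y u w : 0 < rho y -> is_derive y u (dW10 w) (d2W10 u w y).
Proof.
by move=> rhoy_gt0; apply: is_derive_eq; [is_derive_rules | rewrite /d2W10; ring].
Qed.

Lemma rho_ge0 y : 0 <= rho y.
Proof. by apply: addr_ge0; [apply: sumr_ge0 => i _ |]; exact: sqr_ge0. Qed.

Lemma rho_gt0 y : 0 < xN y -> 0 < rho y.
Proof.
move=> xN_gt0; apply: ltr_wpDl; first by apply: sumr_ge0 => i _; exact: sqr_ge0.
by apply: exprn_gt0; apply: addr_gt0.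
Qed.

Lemma rho_gt0_near x : 0 < xN x -> \forall y \near x, 0 < rho y.
Proof.
move=> xN_gt0; near=> y; apply: rho_gt0; near: y.
exact: cvgr_gt _ (@coord_continuous R 1 n.+1 ord0 ord_max x) 0 xN_gt0.
Unshelve. all: by end_near. Qed.

Lemma xb_ecoord (k i : 'I_n) : xb (e (wi k)) i = (i == k)%:R.
Proof. by rewrite /xb /ecoord mxE eqxx. Qed.

Lemma xb_ecoord_max (i : 'I_n) : xb (e ord_max) i = 0.
Proof. by rewrite /xb /ecoord mxE eqxx /= -val_eqE /= ltn_eqF. Qed.

Lemma xN_ecoord (k : 'I_n) : xN (e (wi k)) = 0.
Proof. by rewrite /xN /ecoord mxE eqxx /= -val_eqE /= gtn_eqF. Qed.

Lemma xN_ecoord_max : xN (e ord_max) = 1.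
Proof. by rewrite /xN /ecoord mxE !eqxx. Qed.

Lemma big_delta (F : 'I_n -> R) (k : 'I_n) : \sum_(i < n) F i * (i == k)%:R = F k.
Proof.
rewrite (bigD1 k) //= eqxx mulr1 big1 ?addr0 // => i /negbTE ->.
by rewrite mulr0.
Qed.

Lemma big_delta_sym (F : 'I_n -> R) (k : 'I_n) : \sum_(i < n) F i * (k == i)%:R = F k.
Proof. by rewrite -[RHS](big_delta F k); apply: eq_bigr => i _; rewrite eq_sym. Qed.

Lemma dqform_ecoord_max y : dqform (e ord_max) y = 0.
Proof.
by rewrite /dqform big1 // => i _; rewrite big1 // => j _; rewrite !xb_ecoord_max; ring.
Qed.

Lemma drho_ecoord (k : 'I_n) y : drho (e (wi k)) y = 2 * xb y k.
Proof.
rewrite /drho xN_ecoord mulr0 addr0 -[RHS](big_delta (fun i => 2 * xb y i) k).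
by apply: eq_bigr => i _; rewrite xb_ecoord.
Qed.

Lemma drho_ecoord_max y : drho (e ord_max) y = 2 * (xN y + 1).
Proof.
by rewrite /drho xN_ecoord_max mulr1 big1 ?add0r // => i _; rewrite xb_ecoord_max mulr0.
Qed.

Lemma d2rho_ecoord (i j : 'I_n) : d2rho (e (wi i)) (e (wi j)) = 2 * (i == j)%:R.
Proof.
rewrite /d2rho !xN_ecoord !mulr0 addr0.
rewrite -[RHS](big_delta (fun l => 2 * (l == j)%:R) i).
by apply: eq_bigr => l _; rewrite !xb_ecoord; ring.
Qed.

Lemma d2rho_ecoord_max : d2rho (e ord_max) (e ord_max) = 2.
Proof.
rewrite /d2rho xN_ecoord_max big1 ?add0r ?mulr1 // => i _.
by rewrite xb_ecoord_max !mulr0.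
Qed.

Lemma sum_d2qform_ecoord : \sum_(k < n.+1) d2qform (e k) = 2 * \tr pi.
Proof.
rewrite big_ord_recr /= [X in _ + X]big1 ?addr0; last first.
  by move=> i _; apply: big1 => j _; rewrite !xb_ecoord_max; ring.
rewrite /mxtrace mulr_sumr; apply: eq_bigr => k _.
transitivity (\sum_(i < n) 2 * pi i k * (i == k)%:R); first apply: eq_bigr => i _.
  transitivity (\sum_(j < n) 2 * pi i j * (i == k)%:R * (j == k)%:R).
    by apply: eq_bigr => j _; rewrite !xb_ecoord; ring.
  by rewrite big_delta.
by rewrite big_delta.
Qed.

Lemma sum_dqform_xN_ecoord y : \sum_(k < n.+1) dqform (e k) y * xN (e k) = 0.
Proof.
rewrite big_ord_recr /= dqform_ecoord_max mul0r addr0.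
by apply: big1 => k _; rewrite xN_ecoord mulr0.
Qed.

(* As drho (e k) y = 2 y_k, this is Euler's identity x.grad Q = 2 Q. *)
Lemma sum_dqform_drho_ecoord y :
  \sum_(k < n.+1) dqform (e k) y * drho (e k) y = 4 * qform y.
Proof.
rewrite big_ord_recr /= dqform_ecoord_max mul0r addr0.
under eq_bigr => k _ do rewrite drho_ecoord.
transitivity (\sum_(k < n) \sum_(i < n) \sum_(j < n)
   (pi i j * xb y j * 2 * xb y k * (i == k)%:R
    + pi i j * xb y i * 2 * xb y k * (j == k)%:R)).
  apply: eq_bigr => k _; rewrite mulr_suml; apply: eq_bigr => i _.
  by rewrite mulr_suml; apply: eq_bigr => j _; rewrite !xb_ecoord; ring.
rewrite exchange_big mulr_sumr; apply: eq_bigr => i _.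
rewrite exchange_big mulr_sumr; apply: eq_bigr => j _.
by rewrite big_split /= !big_delta_sym; ring.
Qed.

Lemma sum_xN_drho_ecoord y :
  \sum_(k < n.+1) xN (e k) * drho (e k) y = 2 * (xN y + 1).
Proof.
rewrite big_ord_recr /= xN_ecoord_max mul1r drho_ecoord_max big1 ?add0r // => k _.
by rewrite xN_ecoord mul0r.
Qed.

Lemma sum_drho_sqr_ecoord y : \sum_(k < n.+1) drho (e k) y ^+ 2 = 4 * rho y.
Proof.
rewrite big_ord_recr /= drho_ecoord_max /rho [RHS]mulrDr mulr_sumr.
by congr (_ + _); [apply: eq_bigr => k _; rewrite drho_ecoord |]; ring.
Qed.

Lemma sum_d2rho_ecoord : \sum_(k < n.+1) d2rho (e k) (e k) = 2 * NN.
Proof.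
rewrite big_ord_recr /= d2rho_ecoord_max.
under eq_bigr => k _ do rewrite d2rho_ecoord eqxx /= mulr1n mulr1.
by rewrite sumr_const card_ord -mulr_natr -addn1 natrD; ring.
Qed.

Lemma powR_subr1_mulr (r p : R) : 0 < r -> r `^ (p - 1) * r = r `^ p.
Proof.
move=> r_gt0; rewrite -[X in _ * X](powRr1 (ltW r_gt0)) -powRD ?subrK //.
by rewrite (gt_eqF r_gt0) implybT.
Qed.

Lemma sum_d2phi_term_ecoord a b p x : \tr pi = 0 -> 0 < rho x ->
  \sum_(k < n.+1) d2phi_term a b p (e k) x =
  qform x * p * rho x `^ (p - 1) *
   ((a * xN x + b) * (2 * NN + 4 + 4 * p) + 4 * a * (xN x + 1)).
Proof.
move=> trpi0 rhox_gt0.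
transitivity (\sum_(k < n.+1) (
   ((a * xN x + b) * rho x `^ p) * d2qform (e k)
 + (2 * a * rho x `^ p) * (dqform (e k) x * xN (e k))
 + (2 * (a * xN x + b) * p * rho x `^ (p - 1)) * (dqform (e k) x * drho (e k) x)
 + (2 * qform x * a * p * rho x `^ (p - 1)) * (xN (e k) * drho (e k) x)
 + (qform x * (a * xN x + b) * p * (p - 1) * rho x `^ (p - 1 - 1))
     * drho (e k) x ^+ 2
 + (qform x * (a * xN x + b) * p * rho x `^ (p - 1)) * d2rho (e k) (e k))).
  by apply: eq_bigr => k _; rewrite /d2phi_term; ring.
rewrite !big_split /= -!mulr_sumr sum_d2qform_ecoord sum_dqform_xN_ecoord.
rewrite sum_dqform_drho_ecoord sum_xN_drho_ecoord sum_drho_sqr_ecoord.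
by rewrite sum_d2rho_ecoord trpi0 -(powR_subr1_mulr (p - 1) rhox_gt0); ring.
Qed.

Lemma PhiE eps a1 a2 : Phi eps pi a1 a2 = fun y => eps *
  (phi_term ((NN - 2) / 2) (- ((NN - 2) / 2)) (- (NN / 2)) y
   + phi_term a1 a1 (- (NN / 2) - 2) y + phi_term 0 a2 (- (NN / 2) - 1) y).
Proof.
apply/funext => y; rewrite /Phi /phi_term.
have NN_gt0 : 0 < NN by rewrite ltr0n.
have [rho0|rho_neq0] := eqVneq (rho y) 0.
  by rewrite rho0 !powR0 ?invr0 ?mulr0 ?mul0r ?addr0 ?mulr0 //; apply/eqP => ?; lra.
have rhoy_gt0 : 0 < rho y by rewrite lt_def rho_neq0 rho_ge0.
rewrite (powRB (s := 2)) ?rho_neq0 ?implybT // (powRB (s := 1)) ?rho_neq0 ?implybT //.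
rewrite !powRN powRr1 ?(ltW rhoy_gt0) // powR_mulrn ?(ltW rhoy_gt0) //.
have rhoN_neq0 : rho y `^ (NN / 2) != 0 by rewrite gt_eqF // powR_gt0.
by rewrite /qform; field; rewrite rho_neq0 rhoN_neq0.
Qed.

Lemma laplacian_PhiE eps a1 a2 x : 0 < xN x ->
  laplacian (Phi eps pi a1 a2) x = eps *
   (\sum_(k < n.+1) d2phi_term ((NN - 2) / 2) (- ((NN - 2) / 2)) (- (NN / 2)) (e k) x
  + \sum_(k < n.+1) d2phi_term a1 a1 (- (NN / 2) - 2) (e k) x
  + \sum_(k < n.+1) d2phi_term 0 a2 (- (NN / 2) - 1) (e k) x).
Proof.
move=> xN_gt0; have rhox_gt0 := rho_gt0 xN_gt0.
rewrite /laplacian PhiE -!big_split /= mulr_sumr; apply: eq_bigr => k _.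
apply: (@derive2_near _ _ _ (fun y => eps *
  (dphi_term ((NN - 2) / 2) (- ((NN - 2) / 2)) (- (NN / 2)) (e k) y
   + dphi_term a1 a1 (- (NN / 2) - 2) (e k) y
   + dphi_term 0 a2 (- (NN / 2) - 1) (e k) y))).
  near=> y; have rhoy_gt0 : 0 < rho y by near: y; exact: rho_gt0_near.
  apply: is_derive_eq.
    by repeat first [apply: is_derive_phi_term | assumption | is_derive_step].
  by rewrite /=; ring.
apply: is_derive_eq.
  by repeat first [apply: is_derive_dphi_term | assumption | is_derive_step].
by rewrite /=; ring.
Unshelve. all: by end_near. Qed.

Lemma laplacian_Phi eps a1 a2 x : \tr pi = 0 -> 0 < xN x ->
  laplacian (Phi eps pi a1 a2) x =
  - (2 * eps * NN * (NN - 2) * xN x * qform x * rho x `^ (- (NN / 2) - 1)).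
Proof.
move=> trpi0 xN_gt0; have rhox_gt0 := rho_gt0 xN_gt0.
by rewrite laplacian_PhiE // !sum_d2phi_term_ecoord //; field.
Qed.

Lemma partial2_W10 (i j : 'I_n) x : 0 < xN x ->
  partial (wi i) (partial (wi j) (@W10 R n)) x =
  NN * (NN - 2) * rho x `^ (- (NN / 2) - 1) * xb x i * xb x j
  - (NN - 2) * rho x `^ (- (NN / 2)) * (i == j)%:R.
Proof.
move=> xN_gt0.
have W10_derive : \forall y \near x,
    is_derive y (e (wi j)) (@W10 R n) (dW10 (e (wi j)) y).
  by near=> y; apply: is_derive_W10; near: y; exact: rho_gt0_near.
have dW10_derive := is_derive_dW10 (e (wi i)) (e (wi j)) (rho_gt0 xN_gt0).
rewrite /partial (derive2_near W10_derive dW10_derive) /d2W10.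
have -> : qW - 1 = - (NN / 2) by field.
by rewrite !drho_ecoord d2rho_ecoord; field.
Unshelve. all: by end_near. Qed.

Lemma sum_pi_hessian_W10 x : \tr pi = 0 -> 0 < xN x ->
  \sum_(i < n) \sum_(j < n) pi i j * xN x * partial (wi i) (partial (wi j) (@W10 R n)) x
  = NN * (NN - 2) * xN x * qform x * rho x `^ (- (NN / 2) - 1).
Proof.
move=> trpi0 xN_gt0.
transitivity (NN * (NN - 2) * xN x * rho x `^ (- (NN / 2) - 1) * qform x
  - (NN - 2) * xN x * rho x `^ (- (NN / 2)) * \tr pi); last by rewrite trpi0; ring.
rewrite /qform /mxtrace !mulr_sumr -sumrB; apply: eq_bigr => i _.
rewrite -(big_delta_sym (pi i) i) !mulr_sumr -sumrB; apply: eq_bigr => j _.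
by rewrite partial2_W10 //; ring.
Qed.

End HalfSpace.

Theorem lemma4p3 (R : realType) (n : nat) (eps : R) (pi : 'M[R]_n) (a1 a2 : R) :
  (3 <= n)%N -> 0 < eps -> pi^T = pi -> \tr pi = 0 ->
  forall x : 'rV[R]_n.+1, 0 < xN x ->
    - laplacian (Phi eps pi a1 a2) x =
    2 * eps * \sum_(i < n) \sum_(j < n)
      pi i j * xN x *
      partial (widen_ord (leqnSn n) i) (partial (widen_ord (leqnSn n) j) W10) x.
Proof.
move=> _ _ _ trpi0 x xN_gt0.
by rewrite laplacian_Phi // sum_pi_hessian_W10 // opprK; ring.
Qed.
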